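(* Let $G$ be a graph with $n$ vertices and let $H$ be a blowup of $G$ with $m$ vertices. If $\sigma'$ is a multiset of $m-n$ real numbers and $A\in\mathcal{S}(G)$ is a matrix none of whose diagonal entries belongs to $\sigma'$, then there is a matrix $A'\in\mathcal{S}(H)$ with spectrum $\operatorname{spec}(A)\cup\sigma'$ (union of multisets).
   Context: For a simple graph $G$ on $n$ vertices, $\mathcal{S}(G)$ is the set of all $n\times n$ real symmetric matrices $A=(a_{ij})$ such that for $i\neq j$, $a_{ij}\neq 0$ if and only if $\{i,j\}$ is an edge of $G$ (diagonal entries unrestricted). For a vertex $v$ of a graph and a positive integer $k$, the $k$-duplication of $v$ replaces $v$ by $k$ mutually adjacent vertices, each adjacent to exactly the neighbours of $v$ in $G-v$ (so the resulting graph has $|G|+k-1$ vertices; $1$-duplication does nothing). If $V(G)=\{v_1,\ldots,v_n\}$ and $m_1,\ldots,m_n$ are positive integers, the (closed) blowup of $G$ with respect to $m_1,\ldots,m_n$ is the graph obtained from $G$ by performing the $m_i$-duplication of $v_i$ for $i=1,\ldots,n$ sequentially; it has $\sum_i m_i$ vertices. *)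

From HB Require Import structures.
From mathcomp Require Import all_boot all_order all_algebra.
From mathcomp Require Import all_reals.
Set Implicit Arguments. Unset Strict Implicit. Unset Printing Implicit Defensive.
Import Order.TTheory GRing.Theory Num.Theory.


Definition simple_graph (n : nat) (G : rel 'I_n) : Prop :=
  (forall i j, G i j = G j i) /\ (forall i, ~~ G i i).

Definition in_SG (R : numDomainType) (n : nat) (G : rel 'I_n) (A : 'M[R]_n) : Prop :=
  (A^T = A)%R /\ (forall i j : 'I_n, i != j -> (A i j != 0%R) = G i j).

(* H (on 'I_m) is a (closed) blowup of G (on 'I_n), up to relabelling of
   vertices: there is a surjection f sending each vertex of H to the vertex
   of G it duplicates; the fibres f^-1(v_i) (of sizes m_i >= 1) are the
   cliques of copies of v_i, and two copies of distinct vertices are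
   adjacent iff the original vertices are adjacent in G. *)
Definition is_blowup (n m : nat) (G : rel 'I_n) (H : rel 'I_m) : Prop :=
  exists f : 'I_m -> 'I_n,
    (forall i : 'I_n, exists u : 'I_m, f u = i) /\
    (forall u v : 'I_m, u != v -> H u v = (f u == f v) || G (f u) (f v)).

(* s (a sequence, read up to permutation, i.e. a multiset) is the spectrum of
   the square matrix A: the characteristic polynomial of A splits as
   prod_(x in s) (X - x). *)
Definition spectrum_is (R : comNzRingType) (n : nat) (A : 'M[R]_n) (s : seq R) : Prop :=
  (char_poly A = \prod_(x <- s) ('X - x%:P))%R.

(* Add the vertices one at a time.  To duplicate a vertex [p] of a symmetric matrix [B]
   while adding the eigenvalue [lam], border [B] to diag(lam, B) and conjugate by the
   rotation with cosine [c] and sine [s] in the plane of the new coordinate and [p].  The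
   spectrum grows by [lam]; the new vertex sees [p] with weight [c s (B p p - lam)] and
   every other vertex [j] with weight [s B j p], while the row of [p] is only scaled by
   [c].  Hence for [c, s != 0] and [lam != B p p] the new vertex is a copy of [p].  The two
   modified diagonal entries are the convex combinations [c^2 lam + s^2 B p p] and
   [s^2 lam + c^2 B p p], and a generic choice of [c^2] in (0, 1) keeps them away from the
   eigenvalues still to be added, so that the next duplications remain possible. *)

From HB Require Import structures.
From mathcomp Require Import all_boot all_order all_algebra.
From mathcomp Require Import all_reals.
From mathcomp Require Import perm ring.
Import Order.TTheory GRing.Theory Num.Theory.
Set Implicit Arguments. Unset Strict Implicit. Unset Printing Implicit Defensive.
Local Open Scope ring_scope.

Lemma char_poly_similar (R : comNzRingType) n (P Q M : 'M[R]_n) :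
  Q *m P = 1%:M -> char_poly (P *m M *m Q) = char_poly M.
Proof.
move=> QP; have PQ := mulmx1C QP; rewrite /char_poly.
have -> : char_poly_mx (P *m M *m Q) =
    map_mx polyC P *m char_poly_mx M *m map_mx polyC Q.
  rewrite /char_poly_mx mulmxBr mulmxBl -!map_mxM; congr (_ - _).
  by rewrite scalar_mxC -mulmxA -map_mxM PQ map_mx1 mulmx1.
by rewrite !det_mulmx mulrC mulrA -det_mulmx -map_mxM QP map_mx1 det1 mul1r.
Qed.

Lemma char_poly_perm_conj (R : comNzRingType) n (s : 'S_n) (M : 'M[R]_n) :
  char_poly (row_perm s (col_perm s M)) = char_poly M.
Proof.
by rewrite row_permE col_permE mulmxA char_poly_similar // -perm_mxM mulVg perm_mx1.
Qed.

Lemma sum_delta (R : nzSemiRingType) n (x : 'I_n) (F : 'I_n -> R) :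
  \sum_y (y == x)%:R * F y = F x.
Proof.
by rewrite (bigD1 x) //= eqxx mul1r big1 ?addr0 // => y /negbTE ->; rewrite mul0r.
Qed.

Section Givens.
Variables (R : comNzRingType) (n : nat) (z w : 'I_n) (c s : R).

Definition givens_diag x : R := if (x == z) || (x == w) then c else 1.
Definition givens_off x : R := if x == z then s else if x == w then - s else 0.

Definition givens_mx : 'M[R]_n :=
  \matrix_(x, y) ((y == x)%:R * givens_diag x + (y == tperm z w x)%:R * givens_off x).

Lemma mul_givens_mx (X : 'M[R]_n) x y :
  (givens_mx *m X) x y = givens_diag x * X x y + givens_off x * X (tperm z w x) y.
Proof.
rewrite !mxE; under eq_bigr do rewrite !mxE mulrDl -!mulrA.
by rewrite big_split /= !sum_delta.
Qed.

Lemma givens_conjE (M : 'M[R]_n) x y : M^T = M ->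
  let d := givens_diag in let o := givens_off in let t := tperm z w in
  (givens_mx *m M *m givens_mx^T) x y =
  d x * (d y * M y x + o y * M (t y) x) + o x * (d y * M y (t x) + o y * M (t y) (t x)).
Proof.
move=> MT d o t.
have -> : givens_mx *m M *m givens_mx^T = givens_mx *m (givens_mx *m M)^T.
  by rewrite trmx_mul MT mulmxA.
by rewrite mul_givens_mx ![(_^T) _ _]mxE !mul_givens_mx.
Qed.

Lemma givens_mx_orthogonal :
  z != w -> c ^+ 2 + s ^+ 2 = 1 -> givens_mx^T *m givens_mx = 1%:M.
Proof.
move=> zw cs; apply: mulmx1C; rewrite -[givens_mx in givens_mx *m _]mulmx1.
apply/matrixP => x y; rewrite givens_conjE ?tr_scalar_mx //= !mxE.
rewrite /givens_diag /givens_off.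
have wz : (w == z) = false by rewrite eq_sym (negbTE zw).
case: tpermP => [->|->|/eqP xz /eqP xw]; case: tpermP => [->|->|/eqP yz /eqP yw];
  rewrite ?eqxx ?(negbTE zw) ?wz ?(negbTE xz) ?(negbTE xw) ?(negbTE yz) ?(negbTE yw) /=.
all: rewrite ?(eq_sym z x) ?(eq_sym w x) ?(eq_sym z y) ?(eq_sym w y) ?(eq_sym y x).
all: rewrite ?(negbTE zw) ?wz ?(negbTE xz) ?(negbTE xw) ?(negbTE yz) ?(negbTE yw) /=.
all: try ring.
all: by rewrite -[RHS]cs; ring.
Qed.

End Givens.

Section Duplication.
Variables (R : comNzRingType) (m : nat) (B : 'M[R]_m) (lam : R).

Definition bordered_mx : 'M[R]_(1 + m) := block_mx (lam%:M : 'M_1) 0 0 B.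

Lemma char_poly_bordered_mx : char_poly bordered_mx = ('X - lam%:P) * char_poly B.
Proof.
rewrite /char_poly char_block_diag_mx det_ublock; congr (_ * _).
by rewrite /char_poly_mx map_scalar_mx det_mx11 !mxE eqxx /= !mulr1n.
Qed.

Lemma bordered_mx_sym : B^T = B -> bordered_mx^T = bordered_mx.
Proof. by move=> BT; rewrite /bordered_mx tr_block_mx BT tr_scalar_mx !trmx0. Qed.

Let ord0_lshift : (ord0 : 'I_(1 + m)) = lshift m ord0. Proof. exact: val_inj. Qed.
Let lift0_rshift (j : 'I_m) : (lift ord0 j : 'I_(1 + m)) = rshift 1 j.
Proof. exact: val_inj. Qed.

Lemma bordered_mx00 : bordered_mx ord0 ord0 = lam.
Proof. by rewrite ord0_lshift block_mxEul mxE eqxx mulr1n. Qed.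
Lemma bordered_mx0l j : bordered_mx ord0 (lift ord0 j) = 0.
Proof. by rewrite lift0_rshift ord0_lshift block_mxEur mxE. Qed.
Lemma bordered_mxl0 j : bordered_mx (lift ord0 j) ord0 = 0.
Proof. by rewrite lift0_rshift ord0_lshift block_mxEdl mxE. Qed.
Lemma bordered_mxll i j : bordered_mx (lift ord0 i) (lift ord0 j) = B i j.
Proof. by rewrite !lift0_rshift block_mxEdr. Qed.

Variables (p : 'I_m) (c s : R).
Local Notation p' := (lift ord0 p).
Local Notation Q := (givens_mx ord0 p' c s).

Definition dup_mx : 'M[R]_(1 + m) := Q *m bordered_mx *m Q^T.

Hypothesis BT : B^T = B.

Lemma dup_mx_sym : dup_mx^T = dup_mx.
Proof. by rewrite /dup_mx !trmx_mul trmxK bordered_mx_sym // mulmxA. Qed.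

Lemma char_poly_dup_mx :
  c ^+ 2 + s ^+ 2 = 1 -> char_poly dup_mx = ('X - lam%:P) * char_poly B.
Proof.
move=> cs; rewrite char_poly_similar ?givens_mx_orthogonal ?neq_lift //.
exact: char_poly_bordered_mx.
Qed.

Let lift0_neq0 (j : 'I_m) : (lift ord0 j == ord0) = false.
Proof. by apply/negbTE; rewrite eq_sym neq_lift. Qed.
Let ord0_neq_lift (j : 'I_m) : (ord0 == lift ord0 j) = false.
Proof. by apply/negbTE; rewrite neq_lift. Qed.
Let tperm_lift_other (j : 'I_m) : j != p -> tperm ord0 p' (lift ord0 j) = lift ord0 j.
Proof. by move=> jp; rewrite tpermD ?neq_lift // (inj_eq lift_inj) eq_sym. Qed.

Ltac dup_mx_entry :=
  rewrite /dup_mx givens_conjE ?bordered_mx_sym //= /givens_diag /givens_off;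
  rewrite ?tpermL ?tpermR ?tperm_lift_other ?(inj_eq lift_inj) ?eqxx;
  rewrite ?lift0_neq0 ?ord0_neq_lift ?ifN //=;
  rewrite ?bordered_mx00 ?bordered_mx0l ?bordered_mxl0 ?bordered_mxll; ring.

Lemma dup_mx_new_new : dup_mx ord0 ord0 = c ^+ 2 * lam + s ^+ 2 * B p p.
Proof. by dup_mx_entry. Qed.
Lemma dup_mx_new_copy : dup_mx ord0 p' = c * s * (B p p - lam).
Proof. by dup_mx_entry. Qed.
Lemma dup_mx_copy_copy : dup_mx p' p' = s ^+ 2 * lam + c ^+ 2 * B p p.
Proof. by dup_mx_entry. Qed.

Section Other.
Variables (i j : 'I_m).
Hypotheses (ip : i != p) (jp : j != p).

Lemma dup_mx_new_other : dup_mx ord0 (lift ord0 j) = s * B j p.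
Proof. by dup_mx_entry. Qed.
Lemma dup_mx_copy_other : dup_mx p' (lift ord0 j) = c * B j p.
Proof. by dup_mx_entry. Qed.
Lemma dup_mx_other : dup_mx (lift ord0 i) (lift ord0 j) = B j i.
Proof. by dup_mx_entry. Qed.
End Other.

End Duplication.

(* The closed blowup of [G] in which the copies of vertex [i] form the fibre of [f]
   over [i]; its diagonal is irrelevant to [in_SG]. *)
Definition blowup_rel n m (G : rel 'I_n) (f : 'I_m -> 'I_n) : rel 'I_m :=
  fun u v => (f u == f v) || G (f u) (f v).

Definition dup_label n m (g : 'I_m -> 'I_n) (p : 'I_m) (x : 'I_(1 + m)) : 'I_n :=
  if unlift ord0 x is Some i then g i else g p.

Lemma blowup_rel_sym n m (G : rel 'I_n) (f : 'I_m -> 'I_n) :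
  (forall i j, G i j = G j i) -> forall u v, blowup_rel G f u v = blowup_rel G f v u.
Proof. by move=> Gsym u v; rewrite /blowup_rel eq_sym Gsym. Qed.

Lemma sym_mxE (R : Type) n (M : 'M[R]_n) : M^T = M -> forall i j, M i j = M j i.
Proof. by move=> MT i j; rewrite -{1}MT mxE. Qed.

Lemma in_SG_dup_mx (R : numDomainType) n m (G : rel 'I_n) (g : 'I_m -> 'I_n)
    (B : 'M[R]_m) (p : 'I_m) (lam c s : R) :
  (forall i j, G i j = G j i) -> in_SG (blowup_rel G g) B ->
  c != 0 -> s != 0 -> lam != B p p ->
  in_SG (blowup_rel G (dup_label g p)) (dup_mx B lam p c s).
Proof.
move=> Gsym [BT Bpat] c0 s0 lamB.
have Nsym := sym_mxE (dup_mx_sym lam p c s BT).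
have new_row (j : 'I_m) :
    (dup_mx B lam p c s ord0 (lift ord0 j) != 0) = blowup_rel G g p j.
  have [->|jp] := eqVneq j p.
    rewrite dup_mx_new_copy // !mulf_eq0 !negb_or c0 s0 subr_eq0 eq_sym lamB.
    by rewrite /blowup_rel eqxx.
  by rewrite dup_mx_new_other // mulf_eq0 negb_or s0 Bpat 1?blowup_rel_sym.
have old_rows (i j : 'I_m) : i != j ->
    (dup_mx B lam p c s (lift ord0 i) (lift ord0 j) != 0) = blowup_rel G g i j.
  move=> ij; have [ip|ip] := eqVneq i p.
    subst i; have jp : j != p by rewrite eq_sym.
    by rewrite dup_mx_copy_other // mulf_eq0 negb_or c0 Bpat // blowup_rel_sym.
  have [jp|jp] := eqVneq j p.
    by subst j; rewrite Nsym dup_mx_copy_other // mulf_eq0 negb_or c0 Bpat.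
  by rewrite dup_mx_other // Bpat 1?eq_sym // blowup_rel_sym.
split; first exact: dup_mx_sym.
move=> u v; case: (unliftP ord0 u) => [i ->|->]; case: (unliftP ord0 v) => [j ->|->].
- by rewrite (inj_eq lift_inj) => ij; rewrite old_rows // /blowup_rel /dup_label !liftK.
- by move=> _; rewrite Nsym new_row /blowup_rel /dup_label liftK unlift_none Gsym eq_sym.
- by move=> _; rewrite new_row /blowup_rel /dup_label liftK unlift_none.
- by rewrite eqxx.
Qed.

Lemma exists_notin_open_unit (R : realFieldType) (L : seq R) :
  exists2 t : R, 0 < t < 1 & t \notin L.
Proof.
pose T := [seq k.+2%:R^-1 : R | k <- iota 0 (size L).+1].
have uT : uniq T.
  rewrite map_inj_uniq ?iota_uniq // => k l /invr_inj /eqP.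
  by rewrite eqr_nat => /eqP [].
have /allPn [_ /mapP [k _ ->] kL] : ~~ all (mem L) T.
  apply/negP => /allP /(uniq_leq_size uT).
  by rewrite size_map size_iota ltnn.
by exists k.+2%:R^-1 => //; rewrite invr_gt0 ltr0n invf_lt1 ?ltr0n // ltr1n.
Qed.

(* Each of the two conditions on [t] excludes at most one value per element of [F]. *)
Lemma exists_convex_notin (R : realFieldType) (a b : R) (F : seq R) : a != b ->
  exists t, [/\ 0 < t < 1, t * a + (1 - t) * b \notin F & (1 - t) * a + t * b \notin F].
Proof.
move=> ab; have abN : a - b != 0 by rewrite subr_eq0.
have baN : b - a != 0 by rewrite subr_eq0 eq_sym.
have [t t01] := exists_notin_open_unit
  ([seq (x - b) / (a - b) | x <- F] ++ [seq (x - a) / (b - a) | x <- F]).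
rewrite mem_cat negb_or => /andP [tF1 tF2].
exists t; split => //.
- by apply: contra tF1 => xF; apply/mapP; eexists; [exact: xF | field].
- by apply: contra tF2 => xF; apply/mapP; eexists; [exact: xF | field].
Qed.

Lemma duplicate_vertex (R : rcfType) n m (G : rel 'I_n) (g : 'I_m -> 'I_n)
    (B : 'M[R]_m) (p : 'I_m) (lam : R) (F : seq R) :
  (forall i j, G i j = G j i) -> in_SG (blowup_rel G g) B ->
  (forall i, B i i \notin lam :: F) ->
  exists N : 'M[R]_(1 + m), [/\ in_SG (blowup_rel G (dup_label g p)) N,
    forall x, N x x \notin F & char_poly N = ('X - lam%:P) * char_poly B].
Proof.
move=> Gsym [BT Bpat] Bdiag.
have lamB : lam != B p p by apply: contraNneq (Bdiag p) => <-; rewrite mem_head.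
have [t [/andP [t0 t1] tF1 tF2]] := exists_convex_notin F lamB.
pose c := Num.sqrt t; pose s := Num.sqrt (1 - t).
have c2 : c ^+ 2 = t by rewrite sqr_sqrtr // ltW.
have s2 : s ^+ 2 = 1 - t by rewrite sqr_sqrtr // subr_ge0 ltW.
have c0 : c != 0 by rewrite gt_eqF // sqrtr_gt0.
have s0 : s != 0 by rewrite gt_eqF // sqrtr_gt0 subr_gt0.
exists (dup_mx B lam p c s); split.
- exact: in_SG_dup_mx.
- move=> x; case: (unliftP ord0 x) => [i ->|->]; last by rewrite dup_mx_new_new // c2 s2.
  have [->|ip] := eqVneq i p; first by rewrite dup_mx_copy_copy // c2 s2.
  by rewrite dup_mx_other //; apply: contra (Bdiag i); rewrite inE orbC => ->.
- by rewrite char_poly_dup_mx // c2 s2 addrC subrK.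
Qed.

Lemma in_SG_blowup_perm (R : numDomainType) n m (G : rel 'I_n) (g g' : 'I_m -> 'I_n)
    (s : 'S_m) (M : 'M[R]_m) :
  g' =1 g \o s -> in_SG (blowup_rel G g) M ->
  in_SG (blowup_rel G g') (row_perm s (col_perm s M)).
Proof.
move=> g's [MT Mpat]; split.
  by apply/matrixP => x y; rewrite !mxE -{1}MT mxE.
by move=> u v uv; rewrite !mxE Mpat ?(inj_eq perm_inj) // /blowup_rel !g's.
Qed.

Section Surjection.
Variables (n m : nat) (f : 'I_m -> 'I_n).
Hypothesis f_surj : forall i, exists u, f u = i.

Lemma card_codom_surj : #|codom f| = n.
Proof.
rewrite -[RHS]card_ord; apply/eqP; rewrite eqn_leq max_card /=.
by apply/subset_leq_card/subsetP => i _; have [u <-] := f_surj i; exact: codom_f.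
Qed.

Lemma surj_leq_card : (n <= m)%N.
Proof. by rewrite -card_codom_surj -{2}(card_ord m) leq_image_card. Qed.

Lemma surj_card_inj : m = n -> injective f.
Proof.
move=> mn; have /image_injP f_inj : #|codom f| == #|'I_m|.
  by rewrite card_codom_surj card_ord mn.
by move=> x y; apply: f_inj.
Qed.
End Surjection.

Lemma surj_dup_label n N (f : 'I_(1 + N) -> 'I_n) :
  (forall i, exists u, f u = i) -> (n <= N)%N ->
  exists (s : 'S_(1 + N)) (p : 'I_N),
    let f' u := f (s (lift ord0 u)) in
    (forall i, exists u, f' u = i) /\ forall x, f (s x) = dup_label f' p x.
Proof.
move=> f_surj nN.
have [q [p qp fqp]] : exists q, exists2 p, q != p & f q = f p.
  apply/injectivePn; apply: contraTN nN => /injectiveP /leq_card.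
  by rewrite !card_ord -ltnNge.
pose s := tperm ord0 q.
have s_lift w : w != q -> exists j, s w = lift ord0 j.
  move=> wq; case: (unliftP ord0 (s w)) => [j ->|sw0]; first by exists j.
  by move: wq; rewrite -(tpermK ord0 q w) -/s sw0 tpermL eqxx.
have [p' sp'] : exists p', s p = lift ord0 p' by apply: s_lift; rewrite eq_sym.
exists s, p'; split.
- move=> i; have [u fu] := f_surj i.
  have [w wq fw] : exists2 w, w != q & f w = i.
    have [uq|] := eqVneq u q; last by exists u.
    by exists p; [rewrite eq_sym | rewrite -fqp -uq].
  by have [j sj] := s_lift w wq; exists j; rewrite -sj tpermK.
- move=> x; case: (unliftP ord0 x) => [j ->|->]; first by rewrite /dup_label liftK.
  by rewrite /dup_label unlift_none -sp' tpermK tpermL.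
Qed.

(* [F] holds the eigenvalues added after those of [sg], which the diagonal must avoid. *)
Lemma blowup_extend_spectrum (R : rcfType) n (G : rel 'I_n) (A : 'M[R]_n) :
  (forall i j, G i j = G j i) -> in_SG (blowup_rel G id) A ->
  forall (sg F : seq R) m (f : 'I_m -> 'I_n),
  m = (n + size sg)%N -> (forall i, exists u, f u = i) ->
  (forall i, A i i \notin F ++ sg) ->
  exists A' : 'M[R]_m, [/\ in_SG (blowup_rel G f) A', forall u, A' u u \notin F &
    char_poly A' = char_poly A * \prod_(x <- sg) ('X - x%:P)].
Proof.
move=> Gsym ASG; elim=> [|lam sg IH] F m f mE f_surj Adiag.
  rewrite addn0 in mE; subst m; pose s := perm (surj_card_inj f_surj erefl).
  exists (row_perm s (col_perm s A)); split.
  - by apply: in_SG_blowup_perm ASG => x; rewrite /= permE.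
  - by move=> u; rewrite !mxE; have := Adiag (s u); rewrite cats0.
  - by rewrite char_poly_perm_conj big_nil mulr1.
rewrite addnS in mE; subst m.
have [s [p [f'_surj fsE]]] := surj_dup_label f_surj (leq_addr _ _).
have Adiag' i : A i i \notin (lam :: F) ++ sg.
  by move: (Adiag i); rewrite cat_cons !(mem_cat, in_cons) orbCA.
have [B [BSG Bdiag Bchar]] := IH (lam :: F) _ _ erefl f'_surj Adiag'.
have [N [NSG Ndiag Nchar]] := duplicate_vertex p Gsym BSG Bdiag.
exists (row_perm s^-1 (col_perm s^-1 N)); split.
- by apply: in_SG_blowup_perm NSG => x; rewrite /= -fsE permKV.
- by move=> u; rewrite !mxE.
- by rewrite char_poly_perm_conj Nchar Bchar big_cons mulrCA.
Qed.

Theorem lemma2p4 (R : realType) (n m : nat) (G : rel 'I_n) (H : rel 'I_m)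
    (sigma' : seq R) (A : 'M[R]_n) :
  simple_graph G -> simple_graph H -> is_blowup G H ->
  size sigma' = (m - n)%N ->
  in_SG G A ->
  (forall i : 'I_n, A i i \notin sigma') ->
  exists A' : 'M[R]_m,
    in_SG H A' /\
    (forall s : seq R, spectrum_is A s -> spectrum_is A' (s ++ sigma')).
Proof.
move=> [Gsym _] _ [f [f_surj fH]] sigma'_size [AT Apat] Adiag.
have ASG : in_SG (blowup_rel G id) A.
  by split=> // u v uv; rewrite Apat // /blowup_rel (negbTE uv).
have mE : m = (n + size sigma')%N.
  by rewrite sigma'_size subnKC // (surj_leq_card f_surj).
have [A' [[A'T A'pat] _ A'char]] :=
  blowup_extend_spectrum Gsym ASG (F := [::]) mE f_surj Adiag.
exists A'; split; first by split=> // u v uv; rewrite A'pat // fH.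
by move=> s; rewrite /spectrum_is A'char => ->; rewrite big_cat.
Qed.
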